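(* Fix $\alpha\in(0,1)$ and integers $k\ge1$, $m\ge1$. Let $(P_i)_{i\ge0}$ be the $\alpha$-random walk, $X_i(m)=1$ if $P_i$ is visible at level $m$ (else $0$), $Y_i(m)=X_i(m)\cdots X_{i+k-1}(m)$ and $\overline S_{n,k}(m)=\frac1n\sum_{i=1}^nY_i(m)$. Then $$\mathbf V(\overline S_{n,k}(m))\ll\frac{D_m^4}{\sqrt n},$$ with implied constant depending only on $\alpha$ and $k$.
   Context: The $\alpha$-random walk: $P_0=(0,0)$ and $P_{i+1}=P_i+(1,0)$ with probability $\alpha$, $P_{i+1}=P_i+(0,1)$ with probability $1-\alpha$, independently. A lattice point $(a,b)$ is visible at level $m$ if no prime $p<m$ divides both $a$ and $b$. $D_m=\prod_{p<m}p$ over primes (empty product $=1$). $\mathbf V$ denotes variance. *)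

From mathcomp Require Import all_boot all_order all_algebra.
From mathcomp Require Import reals.
Set Implicit Arguments. Unset Strict Implicit. Unset Printing Implicit Defensive.
Import Order.TTheory GRing.Theory Num.Theory.
Local Open Scope ring_scope.

(* A step sequence of length N: s j = true means step j is (1,0),
   s j = false means step j is (0,1). *)
Notation steps N := {ffun 'I_N -> bool}.

Definition walk_weight (R : realType) (alpha : R) (N : nat) (s : steps N) : R :=
  \prod_(j < N) (if s j then alpha else 1 - alpha).

Definition walk_pos (N : nat) (s : steps N) (i : nat) : nat * nat :=
  ((\sum_(j < N | (j < i)%N) nat_of_bool (s j))%N,
   (\sum_(j < N | (j < i)%N) nat_of_bool (~~ s j))%N).

Definition visible (m : nat) (P : nat * nat) : bool :=
  [forall p : 'I_m, prime p ==> ~~ ((p %| P.1) && (p %| P.2))%N].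

Definition Dm (m : nat) : nat := (\prod_(p < m | prime p) p)%N.

Definition Xv (R : realType) (m N : nat) (s : steps N) (i : nat) : R :=
  (visible m (walk_pos s i))%:R.

Definition Yv (R : realType) (k m N : nat) (s : steps N) (i : nat) : R :=
  \prod_(t < k) Xv R m s (i + t).

(* \bar S_{n,k}(m) = (1/n) sum_{i=1}^n Y_i(m), as a random variable on the
   first n + k steps (enough: it depends on P_1, ..., P_{n+k-1}). *)
Definition Sbar (R : realType) (n k m : nat) (s : steps (n + k)) : R :=
  n%:R^-1 * \sum_(1 <= i < n.+1) Yv R k m s i.

Definition Expect (R : realType) (alpha : R) (N : nat) (f : steps N -> R) : R :=
  \sum_(s : steps N) walk_weight alpha s * f s.

Definition Var (R : realType) (alpha : R) (N : nat) (f : steps N -> R) : R :=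
  Expect alpha (fun s => (f s - Expect alpha f) ^+ 2).

From mathcomp Require Import all_boot all_order all_algebra.
From mathcomp Require Import reals.
From mathcomp Require Import lra ring zify.
Set Implicit Arguments. Unset Strict Implicit. Unset Printing Implicit Defensive.
Import Order.TTheory GRing.Theory Num.Theory.
Local Open Scope ring_scope.

(* The [Y_i] take values in [{0, 1}], so [V(S_{n,k}(m))] is [n^-2] times the sum
   of the covariances [Cov(Y_i, Y_j)], and it is enough to show
   [|Cov(Y_i, Y_j)| << D_m / sqrt(|i - j| + 1)], because
   [sum_j 1 / sqrt(|i - j| + 1) << sqrt n]; this even gives [D_m / sqrt n].
   Visibility at level [m] only depends on the coordinates modulo [D_m].  For
   [j >= i + k - 1], cut the walk after step [i + k - 1]: [Y_i] depends on the
   prefix only, and [Y_j] depends on it only through its number [r] of right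
   steps, via a [D_m]-periodic function [H r] of [r].  The [L = j - i - k + 1]
   steps in between contribute a binomial [B(L, alpha)] number of right steps,
   and the total variation distance between [B(L, alpha)] and its shift by one
   is [O(1 / sqrt L)] (summation by parts, AM-GM, and the second and inverse
   second moments of the binomial law).  Hence [H (r + 1) - H r = O(1 / sqrt L)],
   and by periodicity [H] oscillates by [O(D_m / sqrt L)], which bounds the
   covariance.  Close pairs only need [|Cov(Y_i, Y_j)| <= 1]. *)

(* Reading step sequences as [nat -> bool] (with junk value [false] past the
   end) lets walks of different lengths be cut and glued without casts. *)
Definition stepn (M : nat) (u : steps M) (i : nat) : bool :=
  if insub i is Some o then u o else false.

Lemma stepn_ord M (u : steps M) (o : 'I_M) : stepn u o = u o.
Proof. by rewrite /stepn valK. Qed.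

Lemma stepn_ge M (u : steps M) i : (M <= i)%N -> stepn u i = false.
Proof. by move=> h; rewrite /stepn insubF // ltnNge h. Qed.

Definition catsteps (N M L : nat) (u : steps M) (v : steps L) : steps N :=
  [ffun o : 'I_N => if (o < M)%N then stepn u o else stepn v (o - M)].

Lemma stepn_cat N M L (u : steps M) (v : steps L) i : (M + L = N)%N ->
  stepn (catsteps N u v) i = if (i < M)%N then stepn u i else stepn v (i - M).
Proof.
move=> e; case: (ltnP i N) => hi.
  by rewrite -[i]/(nat_of_ord (Ordinal hi)) stepn_ord ffunE.
by rewrite stepn_ge //; case: ifP => h; rewrite stepn_ge //; lia.
Qed.

Lemma sum_steps_cat (V : nmodType) N M L (F : steps N -> V) : (M + L = N)%N ->
  \sum_(s : steps N) F s = \sum_(u : steps M) \sum_(v : steps L) F (catsteps N u v).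
Proof.
move=> e; rewrite pair_big /=.
rewrite (reindex (fun p : steps M * steps L => catsteps N p.1 p.2)) //.
exists (fun s => ([ffun o : 'I_M => stepn s o], [ffun o : 'I_L => stepn s (o + M)]))
  => [[u v] _|s _] /=.
  congr pair; apply/ffunP => o; rewrite ffunE stepn_cat //.
    by rewrite ltn_ord stepn_ord.
  by rewrite ltnNge leq_addl /= addnK stepn_ord.
apply/ffunP => o; rewrite ffunE; case: ifP => h.
  by rewrite -[nat_of_ord o]/(nat_of_ord (Ordinal h)) stepn_ord ffunE stepn_ord.
case: (ltnP (o - M) L) => h2.
  rewrite -[(o - M)%N]/(nat_of_ord (Ordinal h2)) stepn_ord ffunE /= subnK ?stepn_ord //.
  by rewrite leqNgt h.
by rewrite stepn_ge //; move: (ltn_ord o); lia.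
Qed.

Lemma sum_steps1 (V : nmodType) (F : steps 1 -> V) :
  \sum_(u : steps 1) F u = F [ffun => true] + F [ffun => false].
Proof.
rewrite (reindex (fun b : bool => [ffun => b])) /=; first by rewrite big_bool.
exists (fun u : steps 1 => u ord0) => [b _|u _]; first by rewrite ffunE.
by apply/ffunP => o; rewrite ffunE (ord1 o).
Qed.

Section WalkWeight.
Variables (R : realType) (alpha : R).
Local Notation ww := (walk_weight alpha).

Lemma walk_weightE N (s : steps N) :
  ww s = \prod_(0 <= l < N) (if stepn s l then alpha else 1 - alpha).
Proof. by rewrite /walk_weight big_mkord; apply: eq_bigr => o _; rewrite stepn_ord. Qed.

Lemma walk_weight_cat N M L (u : steps M) (v : steps L) : (M + L = N)%N ->
  ww (catsteps N u v) = ww u * ww v.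
Proof.
move=> e; rewrite !walk_weightE (big_cat_nat (leq0n M) (_ : M <= N)%N); last by lia.
congr (_ * _); first by apply: eq_big_nat => l /andP[_ h]; rewrite stepn_cat // h.
rewrite -{1}[M]add0n big_addn (_ : N - M = L)%N; last by lia.
by apply: eq_big_nat => l _; rewrite stepn_cat // ltnNge leq_addl /= addnK.
Qed.

Lemma walk_weight1 b : ww ([ffun => b] : steps 1) = if b then alpha else 1 - alpha.
Proof. by rewrite /walk_weight big_ord1 ffunE. Qed.

Lemma sum_walk_weight N : \sum_(s : steps N) ww s = 1.
Proof.
rewrite /walk_weight.
rewrite -(bigA_distr_bigA (fun (j : 'I_N) (b : bool) => if b then alpha else 1 - alpha)).
by rewrite big1 // => j _; rewrite big_bool /=; ring.
Qed.

Hypothesis alpha01 : 0 < alpha < 1.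

Lemma walk_weight_ge0 N (s : steps N) : 0 <= ww s.
Proof.
case/andP: alpha01 => h0 h1.
by apply: prodr_ge0 => j _; case: (s j); lra.
Qed.

End WalkWeight.

Definition ntrue (f : nat -> bool) (a b : nat) : nat :=
  (\sum_(a <= l < b) nat_of_bool (f l))%N.

Lemma ntrue_cat f a b c : (a <= b <= c)%N -> ntrue f a c = (ntrue f a b + ntrue f b c)%N.
Proof. by case/andP => h1 h2; rewrite /ntrue (big_cat_nat h1 h2). Qed.

Lemma ntrue_le f a b : (ntrue f a b <= b - a)%N.
Proof.
apply: leq_trans (_ : \sum_(a <= l < b) 1 <= _)%N.
  by apply: leq_sum => l _; case: (f l).
by rewrite sum_nat_const_nat muln1.
Qed.

Lemma eq_ntrue f g a b : (forall l, (a <= l < b)%N -> f l = g l) -> ntrue f a b = ntrue g a b.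
Proof. by move=> h; apply: eq_big_nat => l /h ->. Qed.

Lemma ntrue_addn f a b c : ntrue f (a + c) (b + c) = ntrue (fun l => f (l + c)%N) a b.
Proof. by rewrite /ntrue big_addn addnK. Qed.

Lemma ntrue_catsteps N M L (u : steps M) (v : steps L) : (M + L = N)%N ->
  ntrue (stepn (catsteps N u v)) 0 N = (ntrue (stepn u) 0 M + ntrue (stepn v) 0 L)%N.
Proof.
move=> e; rewrite (@ntrue_cat _ 0 M N); last by rewrite leq0n -e leq_addr.
congr addn; first by apply: eq_ntrue => l /andP[_ hl]; rewrite stepn_cat // hl.
have -> : ntrue (stepn (catsteps N u v)) M N = ntrue (stepn (catsteps N u v)) (0 + M) (L + M).
  by rewrite add0n addnC e.
by rewrite ntrue_addn; apply: eq_ntrue => l _; rewrite stepn_cat // ltnNge leq_addl /= addnK.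
Qed.

(** * The binomial law *)

Section Binomial.
Variables (R : realType) (alpha : R).
Local Notation ww := (walk_weight alpha).

Definition binom_pmf (L x : nat) : R :=
  ('C(L, x))%:R * alpha ^+ x * (1 - alpha) ^+ (L - x).
Local Notation b := binom_pmf.

Lemma binom_pmf_small L x : (L < x)%N -> b L x = 0.
Proof. by move=> h; rewrite /b bin_small // !mul0r. Qed.

Lemma binom_pmf0 L : b L 0 = (1 - alpha) ^+ L.
Proof. by rewrite /b bin0 subn0 expr0 mulr1 mul1r. Qed.

Lemma binom_pmfS L x : b L.+1 x.+1 = alpha * b L x + (1 - alpha) * b L x.+1.
Proof.
rewrite /b binS natrD subSS; case: (ltnP x L) => h.
  by rewrite (_ : (L - x = (L - x.+1).+1)%N); [rewrite !exprS; ring | lia].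
rewrite (bin_small (_ : L < x.+1)%N) // (_ : (L - x.+1 = L - x)%N); last by lia.
by rewrite exprS; ring.
Qed.

Lemma sum_binom_pmfS L (G : nat -> R) :
  \sum_(0 <= x < L.+2) b L.+1 x * G x =
  alpha * \sum_(0 <= x < L.+1) b L x * G x.+1 +
  (1 - alpha) * \sum_(0 <= x < L.+1) b L x * G x.
Proof.
rewrite big_nat_recl // binom_pmf0.
under eq_big_nat do rewrite binom_pmfS mulrDl -[alpha * _ * _]mulrA -[(1 - alpha) * _ * _]mulrA.
rewrite big_split /= -!mulr_sumr.
rewrite [X in _ = _ + (1 - alpha) * X]big_nat_recl // binom_pmf0.
rewrite [X in _ + (_ + (1 - alpha) * X) = _]big_nat_recr //= binom_pmf_small // mul0r addr0.
by rewrite exprS; ring.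
Qed.

Lemma expect_ntrue L (G : nat -> R) :
  \sum_(v : steps L) ww v * G (ntrue (stepn v) 0 L) =
  \sum_(0 <= x < L.+1) b L x * G x.
Proof.
elim: L G => [|L IH] G.
  rewrite big_nat1 binom_pmf0 expr0.
  rewrite (eq_bigr (fun _ => G 0%N)); last first.
    by move=> s _; rewrite /walk_weight big_ord0 /ntrue big_geq // mul1r.
  by rewrite sumr_const card_ffun card_ord /= expn0 mulr1n; ring.
rewrite (sum_steps_cat _ (M := 1) (L := L)) // sum_steps1 sum_binom_pmfS -IH -IH.
have ntrue1 c : ntrue (stepn ([ffun => c] : steps 1)) 0 1 = c.
  by rewrite /ntrue big_nat1 -[0%N]/(nat_of_ord (@ord0 0)) stepn_ord ffunE.
rewrite !mulr_sumr; congr (_ + _); apply: eq_bigr => v _;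
  by rewrite walk_weight_cat // walk_weight1 ntrue_catsteps // ntrue1 mulrA.
Qed.

Lemma sum_binom_pmf L : \sum_(0 <= x < L.+1) b L x = 1.
Proof.
have := expect_ntrue L (fun _ => 1).
under eq_bigr do rewrite mulr1.
under [X in _ = X -> _]eq_big_nat do rewrite mulr1.
by rewrite sum_walk_weight.
Qed.

Lemma binom_pmf_diag L x : (x.+1)%:R * b L.+1 x.+1 = (L.+1)%:R * alpha * b L x.
Proof. by rewrite /b !mulrA -natrM -mul_bin_diag /= natrM subSS exprS; ring. Qed.

Lemma binom_mean L : \sum_(0 <= x < L.+1) x%:R * b L x = L%:R * alpha.
Proof.
case: L => [|L]; first by rewrite big_nat1 !mul0r.
rewrite big_nat_recl // mul0r add0r.
under eq_big_nat do rewrite binom_pmf_diag.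
by rewrite -mulr_sumr sum_binom_pmf mulr1.
Qed.

Lemma binom_factorial_moment2 L :
  \sum_(0 <= x < L.+1) x%:R * (x%:R - 1) * b L x = L%:R * (L%:R - 1) * alpha ^+ 2.
Proof.
case: L => [|L]; first by rewrite big_nat1 !mul0r.
rewrite big_nat_recl // !mul0r add0r.
rewrite (_ : \sum_(0 <= i < L.+1) _ = L.+1%:R * alpha * \sum_(0 <= i < L.+1) i%:R * b L i).
  by rewrite binom_mean -(natr1 L) addrK; ring.
rewrite mulr_sumr; apply: eq_big_nat => i _.
by rewrite mulrAC binom_pmf_diag -(natr1 i) addrK; ring.
Qed.

Hypothesis alpha01 : 0 < alpha < 1.

Lemma binom_pmf_ge0 L x : 0 <= b L x.
Proof.
case/andP: alpha01 => h0 h1.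
by rewrite /b; apply: mulr_ge0; [apply: mulr_ge0 |]; rewrite ?ler0n ?exprn_ge0 //; lra.
Qed.

(* Centred at [(L + 1) alpha], the centring produced by [binom_pmf_succ], not at the mean. *)
Lemma binom_moment2_le L :
  \sum_(0 <= x < L.+1) b L x * (x%:R - (L.+1)%:R * alpha) ^+ 2 <= (L.+1)%:R.
Proof.
set c := (L.+1)%:R * alpha.
have -> : \sum_(0 <= x < L.+1) b L x * (x%:R - c) ^+ 2 =
  \sum_(0 <= x < L.+1) x%:R * (x%:R - 1) * b L x
  + (1 - 2 * c) * \sum_(0 <= x < L.+1) x%:R * b L x + c ^+ 2 * \sum_(0 <= x < L.+1) b L x.
  by rewrite !mulr_sumr -!big_split /=; apply: eq_big_nat => x _; ring.
rewrite binom_factorial_moment2 binom_mean sum_binom_pmf /c -natr1.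
case/andP: alpha01 => h0 h1; have hL : 0 <= L%:R :> R by apply: ler0n.
nra.
Qed.

End Binomial.

(** * Smoothness of the binomial law *)

Lemma expr_le_inv_succ (R : realFieldType) (a : R) L :
  0 < a < 1 -> a ^+ L <= 1 / ((1 - a) * (L.+1)%:R).
Proof.
case/andP=> h0 h1.
have bernoulli : a ^+ L * (1 + L%:R * (1 - a)) <= 1.
  elim: L => [|L IH]; first by rewrite expr0 mul0r addr0 mulr1.
  apply: le_trans IH; rewrite exprS -natr1 -mulrA mulrCA.
  have hL : 0 <= L%:R :> R by apply: ler0n.
  apply: ler_wpM2l; first by apply: exprn_ge0; lra.
  have : 0 <= (1 - a) * (1 - a) * (L%:R + 1) by apply: mulr_ge0; [apply: mulr_ge0|]; lra.
  nra.
have hL : 0 <= L%:R :> R by apply: ler0n.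
have hp : 0 < (1 - a) * (L.+1)%:R by apply: mulr_gt0; [lra | apply: ltr0Sn].
rewrite ler_pdivlMr //; apply: le_trans bernoulli.
apply: ler_wpM2l; first by apply: exprn_ge0; lra.
by rewrite -natr1; nra.
Qed.

Lemma amgm_weighted (R : realFieldType) (t p u w : R) : 0 < t -> 0 <= p -> 0 <= w ->
  p * (`|u| * w) <= t / 2 * (p * u ^+ 2) + 1 / (2 * t) * (p * w ^+ 2).
Proof.
move=> ht hp hw.
have hu : `|u| ^+ 2 = u ^+ 2 by rewrite real_normK // num_real.
have H : 2 * t * (`|u| * w) <= t ^+ 2 * u ^+ 2 + w ^+ 2.
  rewrite -hu; have := sqr_ge0 (t * `|u| - w); rewrite sqrrB; nra.
have -> : t / 2 * (p * u ^+ 2) + 1 / (2 * t) * (p * w ^+ 2) =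
          p / (2 * t) * (t ^+ 2 * u ^+ 2 + w ^+ 2).
  by field; apply/negP => /eqP; lra.
have -> : p * (`|u| * w) = p / (2 * t) * (2 * t * (`|u| * w)).
  by field; apply/negP => /eqP; lra.
by apply: ler_wpM2l => //; apply: divr_ge0 => //; lra.
Qed.

Section BinomialSmoothness.
Variables (R : realType) (alpha : R).
Hypothesis alpha01 : 0 < alpha < 1.
Local Notation b := (binom_pmf alpha).

Lemma binom_pmf_down2 L x : (x <= L)%N ->
  (L.+2)%:R * (L.+1)%:R * (1 - alpha) ^+ 2 * b L x =
  (L.+2 - x)%:R * (L.+1 - x)%:R * b L.+2 x.
Proof.
move=> hx.
have hC : ((L.+2 - x) * (L.+1 - x) * 'C(L.+2, x) = L.+2 * L.+1 * 'C(L, x))%N.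
  have e2 := mul_bin_down L.+2 x; have e1 := mul_bin_down L.+1 x; simpl in e1, e2.
  by rewrite -mulnA mulnCA -e2 mulnCA -e1 mulnA.
rewrite /binom_pmf.
have -> : (1 - alpha) ^+ (L.+2 - x) = (1 - alpha) ^+ 2 * (1 - alpha) ^+ (L - x).
  by rewrite -exprD; congr (_ ^+ _); lia.
have hCR := congr1 (fun n : nat => n%:R : R) hC; rewrite /= !natrM in hCR.
by rewrite !mulrA hCR; ring.
Qed.

Lemma binom_inv_sq_le L :
  \sum_(0 <= x < L.+1) b L x / ((L.+1 - x)%:R) ^+ 2 <=
  2 / ((L.+1)%:R * (L.+2)%:R * (1 - alpha) ^+ 2).
Proof.
case/andP: alpha01 => h0 h1.
(* [1 / d^2 <= 2 / (d (d + 1))] for [d = L + 1 - x], and [binom_pmf_down2] turns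
   [b L x / (d (d + 1))] into a multiple of [b L.+2 x]. *)
set K := (L.+1)%:R * (L.+2)%:R * (1 - alpha) ^+ 2.
have hK : 0 < K by apply: mulr_gt0; [apply: mulr_gt0; apply: ltr0Sn | apply: exprn_gt0; lra].
apply: le_trans (_ : \sum_(0 <= x < L.+1) 2 / K * b L.+2 x <= _); last first.
  rewrite -mulr_sumr ler_piMr //; first by apply: divr_ge0; [lra | apply: ltW].
  rewrite -(@sum_binom_pmf _ alpha L.+2) [X in _ <= X](big_cat_nat (n := L.+1)) //=; last by lia.
  by rewrite lerDl; apply: sumr_ge0 => x _; apply: binom_pmf_ge0.
apply: ler_sum_nat => x /andP[_ hx]; rewrite ltnS in hx.
set d : R := (L.+1 - x)%:R.
have hd : 1 <= d by rewrite /d ler1n; lia.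
have hd1 : (L.+2 - x)%:R = d + 1 by rewrite /d natr1; congr _%:R; lia.
have hb := binom_pmf_ge0 alpha01 L x.
have Eb2 : b L.+2 x = K * b L x / (d * (d + 1)).
  have := binom_pmf_down2 hx; rewrite hd1 -/d /K [(L.+1)%:R * _]mulrC => ->.
  by field; apply/andP; split; apply/negP => /eqP; lra.
have -> : 2 / K * b L.+2 x = 2 * b L x / (d * (d + 1)).
  by rewrite Eb2; field; apply/and3P; split; apply/negP => /eqP; lra.
rewrite -subr_ge0.
have -> : 2 * b L x / (d * (d + 1)) - b L x / d ^+ 2 = b L x * (d - 1) / (d ^+ 2 * (d + 1)).
  by field; apply/andP; split; apply/negP => /eqP; lra.
by apply: divr_ge0; [apply: mulr_ge0; lra | apply: mulr_ge0; [apply: exprn_ge0|]; lra].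
Qed.

Lemma binom_inv_moment2_le L :
  \sum_(0 <= x < L) b L x.+1 * (1 / ((L - x)%:R * alpha)) ^+ 2 <=
  1 / alpha ^+ 2 * (2 / ((L.+1)%:R * (L.+2)%:R * (1 - alpha) ^+ 2)).
Proof.
case/andP: alpha01 => h0 h1.
apply: le_trans (_ : 1 / alpha ^+ 2 * \sum_(0 <= x < L.+1) b L x / ((L.+1 - x)%:R) ^+ 2 <= _).
  rewrite big_nat_recl // mulrDr -[X in X <= _]add0r; apply: lerD.
    apply: mulr_ge0; first by apply: divr_ge0 => //; apply: exprn_ge0; lra.
    by apply: divr_ge0; [apply: binom_pmf_ge0 | apply: exprn_ge0].
  rewrite mulr_sumr; apply: ler_sum_nat => x /andP[_ hx].
  rewrite subSS le_eqVlt; apply/orP; left; apply/eqP.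
  have hD : (L - x)%:R != 0 :> R by rewrite pnatr_eq0 -lt0n subn_gt0.
  by field; apply/andP; split => //; apply: lt0r_neq0.
apply: ler_wpM2l; first by apply: divr_ge0 => //; apply: exprn_ge0; lra.
exact: binom_inv_sq_le.
Qed.

End BinomialSmoothness.

Lemma sum_by_parts (R : comNzRingType) (a g : nat -> R) n :
  \sum_(0 <= x < n.+1) a x * (g x.+1 - g x) =
  a n * g n.+1 - a 0%N * g 0%N + \sum_(0 <= x < n) (a x - a x.+1) * g x.+1.
Proof.
under eq_big_nat do rewrite mulrBr.
rewrite sumrB big_nat_recr //= [X in _ - X]big_nat_recl //=.
under [X in _ = _ + X]eq_big_nat do rewrite mulrBl.
rewrite sumrB /=.
move: (\sum_(0 <= i < n) a i * g i.+1) (\sum_(0 <= i < n) a i.+1 * g i.+1) => A B.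
ring.
Qed.

Definition binom_smooth_const (R : realType) (alpha : R) : R :=
  1 / alpha + 1 / (1 - alpha) + 1 / 2 + 1 / (alpha ^+ 2 * (1 - alpha) ^+ 2).

Section BinomialShift.
Variables (R : realType) (alpha : R).
Hypothesis alpha01 : 0 < alpha < 1.
Local Notation b := (binom_pmf alpha).

Lemma binom_smooth_const_gt0 : 0 < binom_smooth_const alpha.
Proof.
case/andP: alpha01 => h0 h1; rewrite /binom_smooth_const.
have p1 : 0 < 1 / alpha by apply: divr_gt0; lra.
have p2 : 0 < 1 / (1 - alpha) by apply: divr_gt0; lra.
have p3 : 0 < 1 / (alpha ^+ 2 * (1 - alpha) ^+ 2).
  by apply: divr_gt0; [lra | apply: mulr_gt0; apply: exprn_gt0; lra].
lra.
Qed.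

Lemma binom_pmf_succ L x : (x < L)%N ->
  ((L - x)%:R * alpha) * (b L x.+1 - b L x) = b L x.+1 * ((L.+1)%:R * alpha - (x.+1)%:R).
Proof.
move=> hx.
have eC : (x.+1)%:R * ('C(L, x.+1))%:R = (L - x)%:R * ('C(L, x))%:R :> R.
  by rewrite -!natrM mul_bin_left.
have eL : (L.+1)%:R = (L - x)%:R + (x.+1)%:R :> R by rewrite -natrD; congr _%:R; lia.
rewrite /binom_pmf eL.
have -> : (1 - alpha) ^+ (L - x) = (1 - alpha) * (1 - alpha) ^+ (L - x.+1).
  by rewrite -exprS; congr (_ ^+ _); lia.
apply/eqP; rewrite -subr_eq0; apply/eqP.
transitivity (alpha ^+ x.+1 * (1 - alpha) * (1 - alpha) ^+ (L - x.+1) *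
  ((x.+1)%:R * ('C(L, x.+1))%:R - (L - x)%:R * ('C(L, x))%:R)); first by rewrite exprS; ring.
by rewrite eC subrr mulr0.
Qed.

Lemma binom_abs_diff L x : (x < L)%N ->
  `|b L x - b L x.+1| =
  b L x.+1 * (`|(x.+1)%:R - (L.+1)%:R * alpha| * (1 / ((L - x)%:R * alpha))).
Proof.
move=> hx; case/andP: alpha01 => h0 h1.
have hD : 0 < (L - x)%:R * alpha by apply: mulr_gt0 => //; rewrite ltr0n subn_gt0.
have -> : b L x - b L x.+1 =
    b L x.+1 * ((x.+1)%:R - (L.+1)%:R * alpha) / ((L - x)%:R * alpha).
  apply: (@mulIf _ ((L - x)%:R * alpha)); first exact: lt0r_neq0.
  rewrite divfK ?lt0r_neq0 // mulrC -opprB mulrN binom_pmf_succ // -mulrN opprB.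
  by [].
rewrite normrM normrM (ger0_norm (binom_pmf_ge0 alpha01 _ _)) [X in _ * X = _]ger0_norm.
  by rewrite mul1r mulrA.
by rewrite invr_ge0 ltW.
Qed.

Lemma binom_abs_diff_sum_le L :
  \sum_(0 <= x < L) `|b L x - b L x.+1| <=
  (1 / 2 + 1 / (alpha ^+ 2 * (1 - alpha) ^+ 2)) / Num.sqrt (L.+1)%:R.
Proof.
case/andP: alpha01 => h0 h1.
set S : R := (L.+1)%:R; set s : R := Num.sqrt S.
have hS : 1 <= S by rewrite /S ler1n.
have hs : 0 < s by rewrite /s sqrtr_gt0; lra.
have hss : s * s = S by rewrite -expr2 sqr_sqrtr //; lra.
(* AM-GM with weight [t] balances the second moment against the inverse second
   moment; this choice of [t] makes both contributions [O(1 / s)]. *)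
set t : R := 1 / (s * S).
have ht : 0 < t by apply: divr_gt0; [lra | apply: mulr_gt0 => //; lra].
have step x : (0 <= x < L)%N -> `|b L x - b L x.+1| <=
    t / 2 * (b L x.+1 * ((x.+1)%:R - S * alpha) ^+ 2) +
    1 / (2 * t) * (b L x.+1 * (1 / ((L - x)%:R * alpha)) ^+ 2).
  move=> /andP[_ hx]; rewrite binom_abs_diff //.
  apply: amgm_weighted => //; first exact: binom_pmf_ge0.
  by apply: divr_ge0; [lra | apply: mulr_ge0; [apply: ler0n | lra]].
apply: le_trans (ler_sum_nat step) _.
rewrite big_split /= -!mulr_sumr.
have moment2 : \sum_(0 <= x < L) b L x.+1 * (x.+1%:R - S * alpha) ^+ 2 <= S.
  apply: le_trans (binom_moment2_le alpha01 L); rewrite big_nat_recl // lerDr.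
  by apply: mulr_ge0; [apply: binom_pmf_ge0 | apply: sqr_ge0].
have inv_moment2 : \sum_(0 <= x < L) b L x.+1 * (1 / ((L - x)%:R * alpha)) ^+ 2 <=
    1 / alpha ^+ 2 * (2 / (S * (L.+2)%:R * (1 - alpha) ^+ 2)) := binom_inv_moment2_le alpha01 L.
have ht2 : 0 <= t / 2 by apply: divr_ge0; lra.
have ht3 : 0 <= 1 / (2 * t) by apply: divr_ge0; lra.
apply: le_trans (lerD (ler_wpM2l ht2 moment2) (ler_wpM2l ht3 inv_moment2)) _.
set P := alpha ^+ 2 * (1 - alpha) ^+ 2.
have hP : 0 < P by apply: mulr_gt0; apply: exprn_gt0; lra.
have hL2 : S <= (L.+2)%:R by rewrite /S ler_nat.
have -> : t / 2 * S + 1 / (2 * t) * (1 / alpha ^+ 2 * (2 / (S * (L.+2)%:R * (1 - alpha) ^+ 2)))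
    = 1 / 2 / s + S / (L.+2)%:R * (1 / P / s).
  by rewrite /t /P -hss; field; apply/and4P; split; apply/negP => /eqP; lra.
rewrite mulrDl lerD2l ler_piMl //; first by apply: divr_ge0; [apply: divr_ge0 |]; lra.
by rewrite ler_pdivrMr ?mul1r //; lra.
Qed.

Lemma binom_shift_le L (G : nat -> R) : (forall x, 0 <= G x <= 1) ->
  `|\sum_(0 <= x < L.+1) b L x * (G x.+1 - G x)| <=
  binom_smooth_const alpha / Num.sqrt (L.+1)%:R.
Proof.
move=> hG; case/andP: alpha01 => h0 h1.
set S : R := (L.+1)%:R; set s := Num.sqrt S.
have hs : 0 < s by rewrite sqrtr_gt0 ltr0Sn.
have hss : s * s = S by rewrite -expr2 sqr_sqrtr // ler0n.
have hS1 : 1 <= S by rewrite ler1n.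
have hs1 : 1 <= s by nra.
have boundary c : 0 < c -> 1 / (c * S) <= 1 / c / s.
  move=> hc.
  rewrite -hss (_ : 1 / (c * (s * s)) = 1 / c / s * (1 / s)); last first.
    by field; apply/andP; split; apply/negP => /eqP; lra.
  apply: ler_piMr; first by apply: divr_ge0; [apply: divr_ge0 |]; lra.
  by rewrite ler_pdivrMr // mul1r.
have hb x : 0 <= b L x by apply: binom_pmf_ge0.
have hG1 x : `|G x| <= 1 by rewrite ger0_norm; case/andP: (hG x).
rewrite sum_by_parts.
apply: le_trans (ler_normD _ _) _; apply: le_trans (lerD (ler_normD _ _) (ler_norm_sum _ _ _)) _.
rewrite normrN (normrM (b L L)) (normrM (b L 0%N)) (ger0_norm (hb L)) (ger0_norm (hb 0%N)).
have top : b L L * `|G L.+1| <= 1 / (1 - alpha) / s.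
  apply: le_trans (ler_piMr (hb L) (hG1 _)) _; apply: le_trans (boundary _ _); last lra.
  rewrite /binom_pmf binn subnn expr0 mulr1 mulr1n mul1r; apply: expr_le_inv_succ; lra.
have bottom : b L 0 * `|G 0%N| <= 1 / alpha / s.
  apply: le_trans (ler_piMr (hb 0%N) (hG1 _)) _; apply: le_trans (boundary _ h0).
  by rewrite binom_pmf0 -[X in _ / (X * _)](subKr 1); apply: expr_le_inv_succ; lra.
have middle : \sum_(0 <= x < L) `|(b L x - b L x.+1) * G x.+1| <=
    (1 / 2 + 1 / (alpha ^+ 2 * (1 - alpha) ^+ 2)) / s.
  apply: le_trans (binom_abs_diff_sum_le L).
  by apply: ler_sum_nat => x _; rewrite normrM ler_piMr.
apply: le_trans (lerD (lerD top bottom) middle) _.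
by rewrite /binom_smooth_const -!mulrDl; lra.
Qed.

End BinomialShift.

Definition Cov (R : realType) (alpha : R) (N : nat) (f g : steps N -> R) : R :=
  Expect alpha (fun s => f s * g s) - Expect alpha f * Expect alpha g.

Section Expectation.
Variables (R : realType) (alpha : R) (N : nat).
Local Notation E := (@Expect R alpha N).

Lemma eq_Expect (f g : steps N -> R) : f =1 g -> E f = E g.
Proof. by move=> h; apply: eq_bigr => s _; rewrite h. Qed.

Lemma Expect_sum (r : seq nat) (G : nat -> steps N -> R) :
  E (fun s => \sum_(i <- r) G i s) = \sum_(i <- r) E (G i).
Proof. by rewrite /Expect exchange_big /=; apply: eq_bigr => s _; rewrite mulr_sumr. Qed.

Lemma ExpectZ c (f : steps N -> R) : E (fun s => c * f s) = c * E f.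
Proof. by rewrite /Expect mulr_sumr; apply: eq_bigr => s _; ring. Qed.

Lemma ExpectB (f g : steps N -> R) : E (fun s => f s - g s) = E f - E g.
Proof. by rewrite /Expect -sumrB; apply: eq_bigr => s _; ring. Qed.

Lemma Expect_cst c : E (fun _ => c) = c.
Proof. by rewrite /Expect -mulr_suml sum_walk_weight mul1r. Qed.

Lemma Cov_subr_const (f h : steps N -> R) c : Cov alpha f (fun s => h s - c) = Cov alpha f h.
Proof.
have e1 : E (fun s => f s * (h s - c)) = E (fun s => f s * h s) - c * E f.
  by rewrite -ExpectZ -ExpectB; apply: eq_Expect => s; ring.
by rewrite /Cov e1 ExpectB Expect_cst; ring.
Qed.

Lemma Cov_centered (f g : steps N -> R) :
  E (fun s => (f s - E f) * (g s - E g)) = Cov alpha f g.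
Proof.
rewrite /Cov /Expect; set a := E f; set b := E g.
have -> : \sum_(s : steps N) walk_weight alpha s * ((f s - a) * (g s - b)) =
  \sum_(s : steps N) walk_weight alpha s * (f s * g s)
  - b * \sum_(s : steps N) walk_weight alpha s * f s
  - a * \sum_(s : steps N) walk_weight alpha s * g s
  + a * b * \sum_(s : steps N) walk_weight alpha s.
  rewrite (eq_bigr (fun s => walk_weight alpha s * (f s * g s) - b * (walk_weight alpha s * f s)
     - a * (walk_weight alpha s * g s) + a * b * walk_weight alpha s)); last by move=> s _; ring.
  by rewrite big_split /= !sumrB -!mulr_sumr.
by rewrite sum_walk_weight -/(Expect alpha f) -/(Expect alpha g) -/a -/b; ring.
Qed.

Lemma CovC (f g : steps N -> R) : Cov alpha f g = Cov alpha g f.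
Proof.
by rewrite /Cov mulrC; congr (_ - _); apply: eq_Expect => s; rewrite mulrC.
Qed.

Lemma Var_scaled_sum (c : R) (r : seq nat) (F : nat -> steps N -> R) :
  Var alpha (fun s => c * \sum_(i <- r) F i s) =
  c ^+ 2 * \sum_(i <- r) \sum_(j <- r) Cov alpha (F i) (F j).
Proof.
transitivity (c ^+ 2 * \sum_(i <- r) \sum_(j <- r)
    E (fun s => (F i s - E (F i)) * (F j s - E (F j)))); last first.
  by congr (_ * _); apply: eq_bigr => i _; apply: eq_bigr => j _; apply: Cov_centered.
rewrite (eq_bigr (fun i => E (fun s => \sum_(j <- r)
    (F i s - E (F i)) * (F j s - E (F j))))); last by move=> i _; rewrite Expect_sum.
rewrite -Expect_sum -ExpectZ /Var ExpectZ Expect_sum; apply: eq_Expect => s.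
rewrite -mulrBr exprMn; congr (_ * _).
rewrite -sumrB expr2 mulr_suml; apply: eq_bigr => i _.
by rewrite mulr_sumr; apply: eq_bigr => j _.
Qed.

Hypothesis alpha01 : 0 < alpha < 1.

Lemma Expect01 (f : steps N -> R) : (forall s, 0 <= f s <= 1) -> 0 <= E f <= 1.
Proof.
move=> hf; apply/andP; split.
  by apply: sumr_ge0 => s _; apply: mulr_ge0; [apply: walk_weight_ge0 | case/andP: (hf s)].
rewrite -(sum_walk_weight alpha N); apply: ler_sum => s _.
by apply: ler_piMr; [apply: walk_weight_ge0 | case/andP: (hf s)].
Qed.

Lemma Cov_le1 (f g : steps N -> R) :
  (forall s, 0 <= f s <= 1) -> (forall s, 0 <= g s <= 1) -> `|Cov alpha f g| <= 1.
Proof.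
move=> hf hg.
have /andP[? ?] : 0 <= E (fun s => f s * g s) <= 1.
  apply: Expect01 => s; case/andP: (hf s) => ? ?; case/andP: (hg s) => ? ?.
  by apply/andP; split; [apply: mulr_ge0 | apply: mulr_ile1].
case/andP: (Expect01 hf) => ? ?; case/andP: (Expect01 hg) => ? ?.
have : 0 <= E f * E g <= 1 by apply/andP; split; [apply: mulr_ge0 | apply: mulr_ile1].
by rewrite ler_norml /Cov; lra.
Qed.

Lemma abs_Expect_le (f : steps N -> R) e : (forall s, `|f s| <= e) -> `|E f| <= e.
Proof.
move=> hf; apply: le_trans (ler_norm_sum _ _ _) _.
rewrite -[e]mul1r -(sum_walk_weight alpha N) mulr_suml; apply: ler_sum => s _.
by rewrite normrM ger0_norm ?walk_weight_ge0 // ler_wpM2l ?walk_weight_ge0.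
Qed.

Lemma Cov_near_const (f h : steps N -> R) (c e : R) :
  (forall s, 0 <= f s <= 1) -> (forall s, `|h s - c| <= e) -> `|Cov alpha f h| <= 2 * e.
Proof.
move=> hf hh.
rewrite -(Cov_subr_const f h c).
have hfh s : `|f s * (h s - c)| <= e.
  case/andP: (hf s) => f0 f1; rewrite normrM ger0_norm //.
  by apply: le_trans (hh s); apply: ler_piMl.
have hf1 : `|E f| <= 1 by rewrite ger0_norm; case/andP: (Expect01 hf).
apply: le_trans (ler_normB _ _) _; rewrite mulr2n mulrDl mul1r lerD ?abs_Expect_le //.
by rewrite normrM; apply: le_trans (ler_piMl _ hf1) (abs_Expect_le hh).
Qed.

End Expectation.

Section ExpectationCat.
Variables (R : realType) (alpha : R).

Lemma Expect_cat N M L (F : steps N -> R) : (M + L = N)%N ->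
  Expect alpha F =
  Expect alpha (fun u : steps M => Expect alpha (fun v : steps L => F (catsteps N u v))).
Proof.
move=> e; rewrite /Expect (sum_steps_cat _ e); apply: eq_bigr => u _.
by rewrite mulr_sumr; apply: eq_bigr => v _; rewrite walk_weight_cat // mulrA.
Qed.

Lemma Expect_comm M L (F : steps M -> steps L -> R) :
  Expect alpha (fun u => Expect alpha (fun v => F u v)) =
  Expect alpha (fun v => Expect alpha (fun u => F u v)).
Proof.
rewrite /Expect; under eq_bigr do rewrite mulr_sumr.
rewrite exchange_big /=; apply: eq_bigr => v _; rewrite mulr_sumr.
by apply: eq_bigr => u _; rewrite mulrCA.
Qed.

End ExpectationCat.

(** * Visibility modulo [D_m] and the blocks [Y_i] *)

Lemma Dm_gt0 m : (0 < Dm m)%N.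
Proof. by apply: prodn_cond_gt0 => p /prime_gt0. Qed.

Lemma dvdn_Dm m p : prime p -> (p < m)%N -> (p %| Dm m)%N.
Proof. by move=> pp pm; rewrite /Dm (bigD1 (Ordinal pm)) //= dvdn_mulr. Qed.

Lemma visible_mod m a1 b1 a2 b2 :
  a1 = a2 %[mod Dm m] -> b1 = b2 %[mod Dm m] -> visible m (a1, b1) = visible m (a2, b2).
Proof.
move=> ha hb; apply: eq_forallb => p; case: (boolP (prime p)) => //= pp.
have hd := dvdn_Dm pp (ltn_ord p).
have ea : a1 = a2 %[mod p] by rewrite -(modn_dvdm a1 hd) -(modn_dvdm a2 hd) ha.
have eb : b1 = b2 %[mod p] by rewrite -(modn_dvdm b1 hd) -(modn_dvdm b2 hd) hb.
by rewrite /dvdn ea eb.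
Qed.

Lemma prod_bool01 (R : numDomainType) (I : finType) (F : I -> bool) :
  0 <= (\prod_(t : I) (F t)%:R : R) <= 1.
Proof.
apply/andP; split; first by apply: prodr_ge0 => t _; apply: ler0n.
by apply: prodr_ile1 => t _; rewrite ler0n lern1 leq_b1.
Qed.

Section Blocks.
Variables (R : realType) (k m : nat).
Local Notation D := (Dm m).

Definition blockY (f : nat -> bool) (i : nat) : R :=
  \prod_(t < k) (visible m (ntrue f 0 (i + t), (i + t) - ntrue f 0 (i + t))%N)%:R.

(* [Y_j] seen from step [j], where the walk has [z] right steps: the subtraction
   of [z] from the second coordinate is replaced by adding [(D - 1) z], which is
   the same modulo [D] and avoids truncated subtraction. *)
Definition blockY_from (g : nat -> bool) (j z : nat) : R :=
  \prod_(t < k) (visible m (z + ntrue g 0 t, (j + t - ntrue g 0 t) + (D - 1) * z)%N)%:R.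

Lemma blockY01 f i : 0 <= blockY f i <= 1.
Proof. exact: prod_bool01. Qed.

Lemma blockY_from01 g j z : 0 <= blockY_from g j z <= 1.
Proof. exact: prod_bool01. Qed.

Lemma eq_blockY f g i :
  (forall l, (l < i + k - 1)%N -> f l = g l) -> blockY f i = blockY g i.
Proof.
move=> h; apply: eq_bigr => t _; rewrite (@eq_ntrue f g) // => l /andP[_ hl].
by apply: h; have := ltn_ord t; lia.
Qed.

Lemma eq_blockY_from g g' j z :
  (forall l, (l < k)%N -> g l = g' l) -> blockY_from g j z = blockY_from g' j z.
Proof.
move=> h; apply: eq_bigr => t _; rewrite (@eq_ntrue g g') // => l /andP[_ hl].
by apply: h; apply: ltn_trans hl _.
Qed.

Lemma blockY_from_mod g j z : blockY_from g j z = blockY_from g j (z %% D).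
Proof.
apply: eq_bigr => t _; congr ((nat_of_bool _)%:R); apply: visible_mod; first by rewrite modnDml.
by rewrite -[RHS]modnDmr modnMmr modnDmr.
Qed.

Lemma blockY_fromE f j :
  blockY f j = blockY_from (fun l => f (j + l)%N) j (ntrue f 0 j).
Proof.
apply: eq_bigr => t _.
have e1 : ntrue f 0 (j + t) = (ntrue f 0 j + ntrue (fun l => f (j + l)%N) 0 t)%N.
  rewrite (@ntrue_cat _ 0 j) ?leq_addr //; congr addn.
  have := ntrue_addn f 0 t j; rewrite add0n addnC => ->.
  by apply: eq_ntrue => l _; rewrite addnC.
rewrite e1; set a := ntrue f 0 j; set c := ntrue _ 0 t.
have hle : (a + c <= j + t)%N by rewrite -e1 (leq_trans (ntrue_le _ _ _)) // subn0.
have hD := Dm_gt0 m.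
have E : (j + t - c + (D - 1) * a = a * D + (j + t - (a + c)))%N.
  rewrite mulnBl mul1n mulnC; have : (a <= D * a)%N by rewrite leq_pmull.
  lia.
by congr ((nat_of_bool _)%:R); apply: visible_mod => //; rewrite E modnMDl.
Qed.

End Blocks.

(** * Decorrelation of distant blocks *)

Section Decorrelation.
Variables (R : realType) (alpha : R) (k m : nat).
Hypothesis alpha01 : 0 < alpha < 1.
Local Notation D := (Dm m).
Local Notation c := (binom_smooth_const alpha).

(* Expectation of [Y_j] when the walk has [r] right steps [L1] steps before [j]. *)
Definition cond_blockY (j L1 L2 r : nat) : R :=
  Expect alpha (fun v1 : steps L1 => Expect alpha (fun v2 : steps L2 =>
    blockY_from R k m (stepn v2) j (r + ntrue (stepn v1) 0 L1)%N)).

Lemma cond_blockY_mod j L1 L2 r : cond_blockY j L1 L2 r = cond_blockY j L1 L2 (r %% D).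
Proof.
apply: eq_Expect => v1; apply: eq_Expect => v2.
by rewrite blockY_from_mod [in RHS]blockY_from_mod modnDml.
Qed.

Lemma cond_blockY_succ j L1 L2 r :
  `|cond_blockY j L1 L2 r.+1 - cond_blockY j L1 L2 r| <= c / Num.sqrt (L1.+1)%:R.
Proof.
set K := blockY_from R k m.
rewrite /cond_blockY -ExpectB.
under eq_Expect do rewrite -ExpectB.
rewrite Expect_comm; apply: abs_Expect_le => // v2.
set G := fun x => K (stepn v2) j (r + x)%N.
have -> : Expect alpha (fun v1 : steps L1 =>
    K (stepn v2) j (r.+1 + ntrue (stepn v1) 0 L1)%N -
    K (stepn v2) j (r + ntrue (stepn v1) 0 L1)%N) =
  \sum_(0 <= x < L1.+1) binom_pmf alpha L1 x * (G x.+1 - G x).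
  by rewrite -expect_ntrue; apply: eq_bigr => v1 _; rewrite /G /= addnS addSn.
by apply: binom_shift_le => // x; apply: blockY_from01.
Qed.

Lemma cond_blockY_near0 j L1 L2 r :
  `|cond_blockY j L1 L2 r - cond_blockY j L1 L2 0| <= D%:R * (c / Num.sqrt (L1.+1)%:R).
Proof.
set d := c / _; set H := cond_blockY j L1 L2.
have hd : 0 <= d by apply: le_trans (cond_blockY_succ j L1 L2 0).
have telescope q : `|H q - H 0%N| <= q%:R * d.
  elim: q => [|q IH]; first by rewrite subrr normr0 mul0r.
  rewrite -natr1 mulrDl mul1r (_ : H q.+1 - H 0%N = (H q - H 0%N) + (H q.+1 - H q)); last by ring.
  by apply: le_trans (ler_normD _ _) _; apply: lerD => //; apply: cond_blockY_succ.
rewrite /H cond_blockY_mod; apply: le_trans (telescope _) _; apply: ler_wpM2r => //.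
by rewrite ler_nat ltnW // ltn_pmod // Dm_gt0.
Qed.

Lemma Expect_cat3 N M L1 L2 (F : steps N -> R) : (M + (L1 + L2) = N)%N ->
  Expect alpha F = Expect alpha (fun u : steps M => Expect alpha (fun v1 : steps L1 =>
    Expect alpha (fun v2 : steps L2 => F (catsteps N u (catsteps (L1 + L2) v1 v2))))).
Proof.
move=> e; rewrite (Expect_cat alpha F e); apply: eq_Expect => u.
by rewrite (Expect_cat alpha _ (erefl (L1 + L2)%N)).
Qed.

(* Once the walk is cut after the last step [Y_i] depends on, [Y_j] depends on
   the prefix only through its number of right steps, so the covariance is
   controlled by the oscillation of [cond_blockY]. *)
Lemma Cov_blockY_far N i j : (1 <= k)%N -> (i + k - 1 <= j)%N -> (j + k <= N.+1)%N ->
  `|Cov alpha (fun s : steps N => blockY R k m (stepn s) i)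
              (fun s : steps N => blockY R k m (stepn s) j)| <=
  2 * (D%:R * (c / Num.sqrt ((j - (i + k - 1)).+1)%:R)).
Proof.
move=> hk hij hjN.
set M := (i + k - 1)%N; set L1 := (j - M)%N; set L2 := (N - j)%N.
have e : (M + (L1 + L2) = N)%N by rewrite /L1 /L2 /M; lia.
set cat3 := fun (u : steps M) (v1 : steps L1) (v2 : steps L2) =>
  catsteps N u (catsteps (L1 + L2) v1 v2).
have stepn_cat3 u v1 v2 l : stepn (cat3 u v1 v2) l =
    if (l < M)%N then stepn u l
    else if (l - M < L1)%N then stepn v1 (l - M) else stepn v2 (l - M - L1).
  by rewrite !stepn_cat.
have Yi u v1 v2 : blockY R k m (stepn (cat3 u v1 v2)) i = blockY R k m (stepn u) i.
  by apply: eq_blockY => l hl; rewrite stepn_cat3 hl.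
have Yj u v1 v2 : blockY R k m (stepn (cat3 u v1 v2)) j =
    blockY_from R k m (stepn v2) j (ntrue (stepn u) 0 M + ntrue (stepn v1) 0 L1)%N.
  rewrite blockY_fromE (@eq_blockY_from _ _ _ _ (stepn v2)); last first.
    by move=> l hl /=; rewrite stepn_cat3 !ifF; [congr stepn | |]; rewrite /L1 /M in hij *; lia.
  congr blockY_from; rewrite (@ntrue_cat _ 0 M j) ?leq0n //; congr addn.
    by apply: eq_ntrue => l /andP[_ hl]; rewrite stepn_cat3 hl.
  rewrite (_ : j = L1 + M)%N; last by rewrite /L1; lia.
  rewrite -{1}[M]add0n ntrue_addn; apply: eq_ntrue => l /andP[_ hl].
  by rewrite stepn_cat3 ifF ?addnK ?hl //; lia.
have -> : Cov alpha (fun s : steps N => blockY R k m (stepn s) i)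
                   (fun s : steps N => blockY R k m (stepn s) j) =
    Cov alpha (fun u : steps M => blockY R k m (stepn u) i)
              (fun u => cond_blockY j L1 L2 (ntrue (stepn u) 0 M)).
  rewrite /Cov !(Expect_cat3 _ e); congr (_ - _ * _); apply: eq_Expect => u.
  - rewrite -ExpectZ; apply: eq_Expect => v1; rewrite -ExpectZ.
    by apply: eq_Expect => v2; rewrite /= Yi Yj.
  - by rewrite -[RHS](Expect_cst alpha L1); apply: eq_Expect => v1;
      rewrite -[RHS](Expect_cst alpha L2); apply: eq_Expect => v2; rewrite /= Yi.
  - by apply: eq_Expect => v1; apply: eq_Expect => v2; rewrite /= Yj.
apply: Cov_near_const => // [u|u]; first exact: blockY01.
exact: cond_blockY_near0.
Qed.

End Decorrelation.

(** * The variance bound *)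

Lemma walk_posE N (s : steps N) q : (q <= N)%N ->
  walk_pos s q = (ntrue (stepn s) 0 q, q - ntrue (stepn s) 0 q)%N.
Proof.
move=> hq.
have sum_ltn (F : nat -> nat) :
    (\sum_(j < N | (j < q)%N) F j = \sum_(0 <= j < q) F j)%N.
  by rewrite -big_ord_widen // big_mkord.
have e1 : (\sum_(j < N | (j < q)%N) s j = ntrue (stepn s) 0 q)%N.
  by under eq_bigr do rewrite -stepn_ord; rewrite (sum_ltn (fun j => nat_of_bool (stepn s j))).
have e2 : (\sum_(j < N | (j < q)%N) ~~ s j = q - ntrue (stepn s) 0 q)%N.
  under eq_bigr do rewrite -stepn_ord; rewrite (sum_ltn (fun j => nat_of_bool (~~ stepn s j))).
  suff : (\sum_(0 <= j < q) ~~ stepn s j + ntrue (stepn s) 0 q = q)%N by lia.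
  rewrite /ntrue -big_split /= (eq_bigr (fun _ => 1%N)) ?sum_nat_const_nat ?muln1 ?subn0 //.
  by move=> j _; case: (stepn s j).
by rewrite /walk_pos e1 e2.
Qed.

Lemma Yv_blockY (R : realType) k m N (s : steps N) i : (i + k <= N.+1)%N ->
  Yv R k m s i = blockY R k m (stepn s) i.
Proof. by move=> h; apply: eq_bigr => t _; rewrite /Xv walk_posE //; have := ltn_ord t; lia. Qed.

Definition pair_const (R : realType) (alpha : R) (k : nat) : R :=
  (2 * binom_smooth_const alpha + 1) * Num.sqrt k%:R.

Section PairCovariance.
Variables (R : realType) (alpha : R) (k m n : nat).
Hypotheses (alpha01 : 0 < alpha < 1) (k_gt0 : (1 <= k)%N).
Local Notation D := ((Dm m)%:R : R).
Local Notation Y i := (fun s : steps (n + k) => Yv R k m s i).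

Lemma pair_const_gt0 : 0 < pair_const alpha k.
Proof.
have := binom_smooth_const_gt0 alpha01.
by rewrite /pair_const => hc; apply: mulr_gt0; [lra | rewrite sqrtr_gt0 ltr0n].
Qed.

Lemma Cov_Yv_le i j : (1 <= i)%N -> (i <= j)%N -> (j <= n)%N ->
  `|Cov alpha (Y i) (Y j)| <= pair_const alpha k * D / Num.sqrt ((j - i).+1)%:R.
Proof.
move=> h1 h2 h3.
have hD : 1 <= D by rewrite ler1n Dm_gt0.
have hc := binom_smooth_const_gt0 alpha01.
set sd : R := Num.sqrt ((j - i).+1)%:R; set sk : R := Num.sqrt k%:R.
have hsd : 0 < sd by rewrite sqrtr_gt0 ltr0Sn.
have hsk : 0 < sk by rewrite sqrtr_gt0 ltr0n.
have -> : Cov alpha (Y i) (Y j) =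
    Cov alpha (fun s : steps (n + k) => blockY R k m (stepn s) i)
              (fun s : steps (n + k) => blockY R k m (stepn s) j).
  by rewrite /Cov; congr (_ - _ * _); apply: eq_Expect => s; rewrite !Yv_blockY //; lia.
rewrite /pair_const -/sk; case: (leqP (i + k - 1) j) => hij.
  apply: le_trans (@Cov_blockY_far R alpha k m alpha01 (n + k) i j k_gt0 hij _) _; first by lia.
  set sL : R := Num.sqrt ((j - (i + k - 1)).+1)%:R.
  have hsL : 0 < sL by rewrite sqrtr_gt0 ltr0Sn.
  (* [j - i + 1 = g + k <= k (g + 1)] for the gap [g = j - (i + k - 1)]. *)
  have hle : sd <= sk * sL.
    by rewrite /sd /sk /sL -sqrtrM ?ler0n // -natrM ler_sqrt ?ler0n // ler_nat; nia.
  have hinv : 1 / sL <= sk / sd by rewrite ler_pdivrMr // mulrAC ler_pdivlMr //; lra.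
  rewrite (_ : 2 * (D * (binom_smooth_const alpha / sL)) =
               2 * binom_smooth_const alpha * D * (1 / sL)); last by ring.
  rewrite (_ : _ * sk * D / sd = (2 * binom_smooth_const alpha + 1) * D * (sk / sd)); last by ring.
  apply: le_trans (ler_wpM2l _ hinv) _; first by apply: mulr_ge0; lra.
  by apply: ler_wpM2r; [apply: divr_ge0; lra | apply: ler_wpM2r; lra].
apply: le_trans (Cov_le1 alpha01 (fun s => blockY01 R k m (stepn s) i)
  (fun s => blockY01 R k m (stepn s) j)) _.
have hle : sd <= sk by rewrite /sd /sk ler_sqrt ?ler0n // ler_nat; lia.
rewrite ler_pdivlMr // mul1r.
have : sk <= sk * D by rewrite ler_peMr //; lra.
have : 0 <= binom_smooth_const alpha * sk * D by apply: mulr_ge0; [apply: mulr_ge0 |]; lra.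
nra.
Qed.

End PairCovariance.

Lemma sum_inv_sqrt_le (R : rcfType) n :
  \sum_(0 <= d < n) 1 / Num.sqrt ((d.+1)%:R : R) <= 2 * Num.sqrt (n%:R : R).
Proof.
elim: n => [|n IH]; first by rewrite big_geq // sqrtr0 mulr0.
rewrite big_nat_recr //=; apply: le_trans (lerD IH (lexx _)) _.
set a := Num.sqrt (n%:R : R); set b := Num.sqrt ((n.+1)%:R : R).
have ha : 0 <= a by apply: sqrtr_ge0.
have hb : 0 < b by rewrite sqrtr_gt0 ltr0Sn.
have haa : a * a = n%:R by rewrite -expr2 sqr_sqrtr // ler0n.
have hbb : b * b = a * a + 1 by rewrite -expr2 sqr_sqrtr ?ler0n // haa natr1.
(* [1 / b <= 2 (b - a)] because [2 a b <= a^2 + b^2 = 2 b^2 - 1]. *)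
have hab : 2 * a * b <= 2 * (a * a) + 1.
  have : 0 <= (a - b) ^+ 2 by apply: sqr_ge0.
  by rewrite sqrrB; nra.
rewrite -subr_ge0 (_ : _ - _ = (2 * (b * b) - 2 * a * b - 1) / b); last first.
  by field; apply/negP => /eqP; lra.
by apply: divr_ge0; lra.
Qed.

Lemma sum_dist_le (R : numDomainType) (g : nat -> R) a i b :
  (forall d, 0 <= g d) -> (a <= i < b)%N ->
  \sum_(a <= j < b) g ((i - j) + (j - i))%N <= 2 * \sum_(0 <= d < b - a) g d.
Proof.
move=> hg /andP[hai hib].
have sum_mono x y : (x <= y)%N -> \sum_(0 <= d < x) g d <= \sum_(0 <= d < y) g d.
  move=> hxy; rewrite [X in _ <= X](big_cat_nat (n := x)) //= lerDl.
  by apply: sumr_ge0 => d _.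
rewrite (big_cat_nat (n := i)) //=; last exact: ltnW.
rewrite mulr2n mulrDl mul1r; apply: lerD.
  rewrite big_nat_rev /= (eq_big_nat _ _ (F2 := fun j => g (j + 1 - a)%N)); last first.
    by move=> j /andP[h1 h2]; congr g; lia.
  rewrite -{1}[a]add0n big_addn (eq_big_nat _ _ (F2 := fun j => g j.+1)); last first.
    by move=> j _; congr g; lia.
  apply: le_trans (_ : \sum_(0 <= d < (i - a).+1) g d <= _); last by apply: sum_mono; lia.
  by rewrite big_nat_recl //= lerDr.
rewrite -{1}[i]add0n big_addn (eq_big_nat _ _ (F2 := fun j => g j)).
  by apply: sum_mono; lia.
by move=> j _; congr g; lia.
Qed.

Section Variance.
Variables (R : realType) (alpha : R) (k m n : nat).
Hypotheses (alpha01 : 0 < alpha < 1) (k_gt0 : (1 <= k)%N) (n_gt0 : (1 <= n)%N).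
Local Notation D := ((Dm m)%:R : R).
Local Notation Y i := (fun s : steps (n + k) => Yv R k m s i).
Local Notation c := (pair_const alpha k).

Lemma sum_Cov_Yv_row_le i : (1 <= i <= n)%N ->
  \sum_(1 <= j < n.+1) Cov alpha (Y i) (Y j) <= 4 * c * D * Num.sqrt n%:R.
Proof.
move=> hi.
set g : nat -> R := fun d => 1 / Num.sqrt ((d.+1)%:R).
have hg d : 0 <= g d by apply: divr_ge0; [lra | apply: sqrtr_ge0].
have hc : 0 <= c * D by apply: mulr_ge0; [apply: ltW; apply: pair_const_gt0 | apply: ler0n].
apply: le_trans (_ : \sum_(1 <= j < n.+1) c * D * g ((i - j) + (j - i))%N <= _).
  apply: ler_sum_nat => j /andP[hj1 hjn]; apply: le_trans (ler_norm _) _.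
  rewrite /g mulrA mulr1; case/andP: hi => hi1 hin; case: (leqP i j) => hij.
    by rewrite (_ : i - j = 0)%N ?add0n; [apply: Cov_Yv_le | lia].
  by rewrite CovC (_ : j - i = 0)%N ?addn0; [apply: Cov_Yv_le => //; lia | lia].
rewrite -mulr_sumr (_ : 4 * c * D * _ = c * D * (2 * (2 * Num.sqrt n%:R))); last by ring.
apply: ler_wpM2l => //; apply: le_trans (sum_dist_le hg _) _; first by rewrite ltnS.
by rewrite subSS subn0 ler_wpM2l ?sum_inv_sqrt_le.
Qed.

Lemma Var_Sbar_le : Var alpha (@Sbar R n k m) <= 4 * c * D / Num.sqrt n%:R.
Proof.
set sq : R := Num.sqrt n%:R.
have hsq : 0 < sq by rewrite sqrtr_gt0 ltr0n.
have hsq2 : sq * sq = n%:R by rewrite -expr2 sqr_sqrtr // ler0n.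
rewrite (Var_scaled_sum _ _ (index_iota 1 n.+1) (fun i s => Yv R k m s i)).
apply: le_trans (_ : n%:R^-1 ^+ 2 * \sum_(1 <= i < n.+1) 4 * c * D * sq <= _).
  apply: ler_wpM2l; first by rewrite exprn_ge0 // invr_ge0 ler0n.
  by apply: ler_sum_nat => i hi; apply: sum_Cov_Yv_row_le; rewrite -ltnS.
rewrite sumr_const_nat subn1 /= -[_ * sq *+ n]mulr_natr -hsq2.
rewrite le_eqVlt; apply/orP; left; apply/eqP.
by field; apply/negP => /eqP; lra.
Qed.

End Variance.

Theorem proposition5 (R : realType) (alpha : R) (k : nat) :
  0 < alpha < 1 -> (1 <= k)%N ->
  exists C : R, 0 < C /\
    forall m n : nat, (1 <= m)%N -> (1 <= n)%N ->
      Var alpha (@Sbar R n k m) <= C * (Dm m)%:R ^+ 4 / Num.sqrt (n%:R).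
Proof.
move=> alpha01 k_gt0.
have hc := pair_const_gt0 alpha01 k_gt0.
exists (4 * pair_const alpha k); split => [|m n _ n_gt0]; first lra.
apply: le_trans (Var_Sbar_le m alpha01 k_gt0 n_gt0) _.
have hD : 1 <= (Dm m)%:R :> R by rewrite ler1n Dm_gt0.
apply: ler_wpM2r; first by rewrite invr_ge0 sqrtr_ge0.
by apply: ler_wpM2l; [lra | apply: ler_eXnr].
Qed.
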